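(* In the process algebra $\mathcal{G}$ described in the context, let $\mathbb{U}=U_{i_1}U_{i_2}\cdots U_{i_l}$ and $\mathbb{V}=V_{j_1}V_{j_2}\cdots V_{j_r}$ with all $i_s,j_s\in\mathcal{N}$, let $B\in\{\epsilon,Z,G_v\}$, let $\mathbb{P}$ be any sequential composition (possibly empty) of constants from $\{U_k,V_k:k\in\mathcal{N}\}$, and let $\approxeq\;\in\{\simeq,\approx\}$. Then: (1) $I\|B\mathbb{P}\mathbb{U}\approxeq I\|B\mathbb{P}\mathbb{V}$ if and only if $u_{i_1}u_{i_2}\cdots u_{i_l}=v_{j_1}v_{j_2}\cdots v_{j_r}$; (2) $S\|B\mathbb{P}\mathbb{U}\approxeq S\|B\mathbb{P}\mathbb{V}$ if and only if the index sequences coincide: $i_1i_2\cdots i_l=j_1j_2\cdots j_r$.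
   Context: Process algebras: a triple $(\mathcal{C},\mathcal{A},\Delta)$ of finitely many constants, actions (including silent $\tau$) and rules $X\stackrel{\ell}{\longrightarrow}P$. Processes: $P::=\epsilon\mid X\mid PP'\mid P\|P'$, sequential composition associative, parallel composition associative and commutative, $\epsilon$ a unit for both. Semantics: rules of $\Delta$; if $P\stackrel{\ell}{\longrightarrow}P'$ then $PQ\stackrel{\ell}{\longrightarrow}P'Q$, $P\|Q\stackrel{\ell}{\longrightarrow}P'\|Q$, $Q\|P\stackrel{\ell}{\longrightarrow}Q\|P'$. $\Longrightarrow$ is the reflexive transitive closure of $\stackrel{\tau}{\longrightarrow}$; $\stackrel{\widehat{\ell}}{\Longrightarrow}$ is $\Longrightarrow\stackrel{\ell}{\longrightarrow}\Longrightarrow$ if $\ell\ne\tau$ and $\Longrightarrow$ if $\ell=\tau$. Weak bisimilarity $\approx$ is the largest relation $\mathcal{B}$ such that whenever $P\mathcal{B}Q$ and $P\stackrel{\ell}{\longrightarrow}P'$ there is $Q'$ with $Q\stackrel{\widehat{\ell}}{\Longrightarrow}Q'$, $P'\mathcal{B}Q'$, and symmetrically. Branching bisimilarity $\simeq$ is the largest relation $\mathcal{B}$ such that whenever $P\mathcal{B}Q$ and $P\stackrel{\ell}{\longrightarrow}P'$, either $Q\Longrightarrow Q''\stackrel{\ell}{\longrightarrow}Q'$ with $P\mathcal{B}Q''$ and $P'\mathcal{B}Q'$, or $\ell=\tau$ and $P'\mathcal{B}Q$; and symmetrically. The algebra $\mathcal{G}$: fix a finite alphabet $\Sigma$ with $|\Sigma|\ge2$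 and a Post Correspondence instance $\mathrm{INST}=\{(u_1,v_1),\dots,(u_n,v_n)\}$ with $u_k,v_k\in\Sigma^{+}$; let $\mathcal{N}=\{1,\dots,n\}$. Actions: $\{\lambda_U,\lambda_V,\lambda_D,\lambda_I,\lambda_S,\lambda_Z\}\cup\mathcal{N}\cup\Sigma\cup\{\tau\}$. Constants: $X,Y,Z,I,S,C,C',D,G,G',G_u,G_v,G_v'$, $U_k,V_k$ ($k\in\mathcal{N}$), and $W(\omega,k),W(\omega,0)$ for $k\in\mathcal{N}$ and $\omega$ a (possibly empty) suffix of $u_k$ or of $v_k$; $\mathcal{W}$ is the set of these $W$-constants. Rules (with $k$ ranging over $\mathcal{N}$, $a$ over $\Sigma$, $W$ over $\mathcal{W}$): $X\stackrel{\lambda_U}{\longrightarrow}D\|G_v$, $X\stackrel{\tau}{\longrightarrow}D$, $Y\stackrel{\tau}{\longrightarrow}D$, $D\stackrel{\tau}{\longrightarrow}D\|G_u$, $D\stackrel{\lambda_D}{\longrightarrow}C$; $G_u\stackrel{\tau}{\longrightarrow}G_uU_k$, $G_u\stackrel{\lambda_U}{\longrightarrow}G_vU_k$, $G_u\stackrel{\tau}{\longrightarrow}G_v'$, $G_v'\stackrel{\tau}{\longrightarrow}G_v'V_k$, $G_v'\stackrel{\tau}{\longrightarrow}Z$; $G_v\stackrel{\tau}{\longrightarrow}G_vV_k$, $G_v\stackrel{\tau}{\longrightarrow}\epsilon$, $G_v\stackrel{\lambda_V}{\longrightarrow}Z$, $Z\stackrel{\tau}{\longrightarrow}\epsilon$,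 $Z\stackrel{\lambda_Z}{\longrightarrow}\epsilon$; $C\stackrel{\lambda_I}{\longrightarrow}I$, $C\stackrel{\lambda_S}{\longrightarrow}S$, $C\stackrel{\tau}{\longrightarrow}C\|G$, $C\stackrel{\tau}{\longrightarrow}C\|G_v$; $G\stackrel{\tau}{\longrightarrow}GU_k$, $G\stackrel{\tau}{\longrightarrow}GV_k$, $G\stackrel{\tau}{\longrightarrow}\epsilon$; $I\stackrel{\lambda_I}{\longrightarrow}C'$, $I\stackrel{k}{\longrightarrow}I$, $S\stackrel{\lambda_S}{\longrightarrow}C'$, $S\stackrel{a}{\longrightarrow}S$, $C'\stackrel{\tau}{\longrightarrow}C'\|G'$, $C'\stackrel{\tau}{\longrightarrow}\epsilon$; $G'\stackrel{\tau}{\longrightarrow}G'U_k$, $G'\stackrel{\tau}{\longrightarrow}G'V_k$, $G'\stackrel{\tau}{\longrightarrow}G'W$, $G'\stackrel{\tau}{\longrightarrow}G_v$, $G'\stackrel{\tau}{\longrightarrow}Z$; $U_k\stackrel{\tau}{\longrightarrow}W(u_k,k)$, $V_k\stackrel{\tau}{\longrightarrow}W(v_k,k)$; $W(a\omega,k)\stackrel{a}{\longrightarrow}W(\omega,k)$, $W(a\omega,0)\stackrel{a}{\longrightarrow}W(\omega,0)$, $W(\omega,k)\stackrel{k}{\longrightarrow}W(\omega,0)$, $W(a\omega,k)\stackrel{\tau}{\longrightarrow}W(\omega,k)$, $W(a\omega,0)\stackrel{\tau}{\longrightarrow}W(\omega,0)$, $W(\omega,k)\stackrel{\tau}{\longrightarrow}W(\omega,0)$,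 $W(\epsilon,0)\stackrel{\tau}{\longrightarrow}\epsilon$. *)

From mathcomp Require Import all_boot.
Set Implicit Arguments. Unset Strict Implicit. Unset Printing Implicit Defensive.

Inductive act (Sg : Type) (n : nat) : Type :=
  | lU | lV | lD | lI | lS | lZ
  | aN of 'I_n
  | aL of Sg
  | tau.

(* Constants.  cW w None stands for W(w,0), cW w (Some k) for W(w,k). *)
Inductive const (Sg : Type) (n : nat) : Type :=
  | cX | cY | cZ | cI | cS | cC | cC' | cD | cG | cG' | cGu | cGv | cGv'
  | cU of 'I_n
  | cV of 'I_n
  | cW of seq Sg & option 'I_n.

Inductive proc (Sg : Type) (n : nat) : Type :=
  | Eps
  | Cst of const Sg n
  | Seq of proc Sg n & proc Sg n
  | Par of proc Sg n & proc Sg n.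

Arguments lU {Sg n}. Arguments lV {Sg n}. Arguments lD {Sg n}.
Arguments lI {Sg n}. Arguments lS {Sg n}. Arguments lZ {Sg n}.
Arguments tau {Sg n}.
Arguments cX {Sg n}. Arguments cY {Sg n}. Arguments cZ {Sg n}.
Arguments cI {Sg n}. Arguments cS {Sg n}. Arguments cC {Sg n}.
Arguments cC' {Sg n}. Arguments cD {Sg n}. Arguments cG {Sg n}.
Arguments cG' {Sg n}. Arguments cGu {Sg n}. Arguments cGv {Sg n}.
Arguments cGv' {Sg n}.
Arguments Eps {Sg n}. Arguments cU {Sg n}. Arguments cV {Sg n}. Arguments cW {Sg n}. Arguments aN {Sg n}. Arguments aL {Sg n}.

Inductive scong (Sg : Type) (n : nat) : proc Sg n -> proc Sg n -> Prop :=
  | sc_refl P : scong P P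
  | sc_sym P Q : scong P Q -> scong Q P
  | sc_trans P Q R : scong P Q -> scong Q R -> scong P R
  | sc_seq P P' Q Q' : scong P P' -> scong Q Q' -> scong (Seq P Q) (Seq P' Q')
  | sc_par P P' Q Q' : scong P P' -> scong Q Q' -> scong (Par P Q) (Par P' Q')
  | sc_seqA P Q R : scong (Seq (Seq P Q) R) (Seq P (Seq Q R))
  | sc_parA P Q R : scong (Par (Par P Q) R) (Par P (Par Q R))
  | sc_parC P Q : scong (Par P Q) (Par Q P)
  | sc_seq0l P : scong (Seq Eps P) P
  | sc_seq0r P : scong (Seq P Eps) P
  | sc_par0l P : scong (Par Eps P) P.

Section G.
Variables (Sg : eqType) (n : nat) (u v : 'I_n -> seq Sg).

Local Notation act := (act Sg n).
Local Notation const := (const Sg n).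
Local Notation proc := (proc Sg n).
Local Notation C c := (@Cst Sg n c).

Definition is_suffix (w w' : seq Sg) : Prop := exists p, w' = p ++ w.

Definition validW (w : seq Sg) : Prop :=
  exists k, is_suffix w (u k) \/ is_suffix w (v k).

Inductive rule : const -> act -> proc -> Prop :=
  | r_X1 : rule cX lU (Par (C cD) (C cGv))
  | r_X2 : rule cX tau (C cD)
  | r_Y : rule cY tau (C cD)
  | r_D1 : rule cD tau (Par (C cD) (C cGu))
  | r_D2 : rule cD lD (C cC)
  | r_Gu1 k : rule cGu tau (Seq (C cGu) (C (cU k)))
  | r_Gu2 k : rule cGu lU (Seq (C cGv) (C (cU k)))
  | r_Gu3 : rule cGu tau (C cGv')
  | r_Gv'1 k : rule cGv' tau (Seq (C cGv') (C (cV k)))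
  | r_Gv'2 : rule cGv' tau (C cZ)
  | r_Gv1 k : rule cGv tau (Seq (C cGv) (C (cV k)))
  | r_Gv2 : rule cGv tau Eps
  | r_Gv3 : rule cGv lV (C cZ)
  | r_Z1 : rule cZ tau Eps
  | r_Z2 : rule cZ lZ Eps
  | r_C1 : rule cC lI (C cI)
  | r_C2 : rule cC lS (C cS)
  | r_C3 : rule cC tau (Par (C cC) (C cG))
  | r_C4 : rule cC tau (Par (C cC) (C cGv))
  | r_G1 k : rule cG tau (Seq (C cG) (C (cU k)))
  | r_G2 k : rule cG tau (Seq (C cG) (C (cV k)))
  | r_G3 : rule cG tau Eps
  | r_I1 : rule cI lI (C cC')
  | r_I2 k : rule cI (aN k) (C cI)
  | r_S1 : rule cS lS (C cC')
  | r_S2 a : rule cS (aL a) (C cS)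
  | r_C'1 : rule cC' tau (Par (C cC') (C cG'))
  | r_C'2 : rule cC' tau Eps
  | r_G'1 k : rule cG' tau (Seq (C cG') (C (cU k)))
  | r_G'2 k : rule cG' tau (Seq (C cG') (C (cV k)))
  | r_G'3 w ko : validW w -> rule cG' tau (Seq (C cG') (C (cW w ko)))
  | r_G'4 : rule cG' tau (C cGv)
  | r_G'5 : rule cG' tau (C cZ)
  | r_U k : rule (cU k) tau (C (cW (u k) (Some k)))
  | r_V k : rule (cV k) tau (C (cW (v k) (Some k)))
  | r_W1 a w ko : validW (a :: w) -> rule (cW (a :: w) ko) (aL a) (C (cW w ko))
  | r_W2 w k : validW w -> rule (cW w (Some k)) (aN k) (C (cW w None))
  | r_W3 a w ko : validW (a :: w) -> rule (cW (a :: w) ko) tau (C (cW w ko))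
  | r_W4 w k : validW w -> rule (cW w (Some k)) tau (C (cW w None))
  | r_W5 : rule (cW [::] None) tau Eps.

Inductive step : proc -> act -> proc -> Prop :=
  | st_rule c l P : rule c l P -> step (C c) l P
  | st_seq P l P' Q : step P l P' -> step (Seq P Q) l (Seq P' Q)
  | st_parl P l P' Q : step P l P' -> step (Par P Q) l (Par P' Q)
  | st_parr P l P' Q : step P l P' -> step (Par Q P) l (Par Q P')
  | st_cong P P1 l P2 P' :
      scong P P1 -> step P1 l P2 -> scong P2 P' -> step P l P'.

Inductive tsteps : proc -> proc -> Prop :=
  | ts_refl P : tsteps P P
  | ts_step P P' Q : step P tau P' -> tsteps P' Q -> tsteps P Q.

Definition wstep (P : proc) (l : act) (Q : proc) : Prop :=
  match l with
  | tau => tsteps P Q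
  | _ => exists P1 P2, [/\ tsteps P P1, step P1 l P2 & tsteps P2 Q]
  end.

Definition weak_bisimulation (B : proc -> proc -> Prop) : Prop :=
  forall P Q, B P Q ->
    (forall l P', step P l P' -> exists Q', wstep Q l Q' /\ B P' Q') /\
    (forall l Q', step Q l Q' -> exists P', wstep P l P' /\ B P' Q').

Definition branching_bisimulation (B : proc -> proc -> Prop) : Prop :=
  forall P Q, B P Q ->
    (forall l P', step P l P' ->
       (exists Q'' Q', [/\ tsteps Q Q'', step Q'' l Q', B P Q'' & B P' Q'])
       \/ (l = tau /\ B P' Q)) /\
    (forall l Q', step Q l Q' ->
       (exists P'' P', [/\ tsteps P P'', step P'' l P', B P'' Q & B P' Q'])
       \/ (l = tau /\ B P Q')).

(* The largest (weak / branching) bisimulation = union of all of them. *)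
Definition weakly_bisimilar (P Q : proc) : Prop :=
  exists B, weak_bisimulation B /\ B P Q.

Definition branching_bisimilar (P Q : proc) : Prop :=
  exists B, branching_bisimulation B /\ B P Q.

End G.

Definition seqp (Sg : Type) (n : nat) (cs : seq (const Sg n)) : proc Sg n :=
  foldr (fun c p => Seq (Cst c) p) Eps cs.

Definition UV (Sg : Type) (n : nat) (x : 'I_n + 'I_n) : const Sg n :=
  match x with inl k => cU k | inr k => cV k end.

(* Modulo the structural laws a process is a multiset of threads, and a step
   fires a rule at the head of one thread.  Next to the monitor I or S, the
   thread B P U is, up to its head B, "plain": each U_k, V_k unfolds silently
   into W(u_k,k), W(v_k,k), which emit the letters of the word, each of which
   may instead be skipped by a tau, and then the index k, likewise skippable.
   The monitor I absorbs indices and S absorbs letters, so all that can be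
   observed of the thread is its word of letters (under I) or of indices
   (under S).
   If these words agree, then pairing monitored states with equal observation
   words, together with all states after the monitor's second action (C' next
   to threads it can spawn and dissolve, hence mutually tau-reachable) and
   structural congruence, is a branching bisimulation.  Conversely, in a weak
   bisimulation a visible action can only be answered by the same action,
   while taus only drop observations, so each observation word is a
   subsequence of the other.  A head Z or G_v is exposed by firing lambda_Z or
   lambda_V, which the partner can only match on the same head. *)
From mathcomp Require Import all_boot.
From Stdlib Require Import Permutation.
Set Implicit Arguments. Unset Strict Implicit. Unset Printing Implicit Defensive.

Section NormalForm.
Variables (Sg : Type) (n : nat).
Notation const := (const Sg n).
Notation proc := (proc Sg n).
Notation thread := (seq const).
Notation soup := (seq thread).

Definition seq_nf (p q : option soup) : option soup :=
  match p, q with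
  | Some [::], _ => q
  | _, Some [::] => p
  | Some [:: t], Some [:: t'] => Some [:: t ++ t']
  | _, _ => None
  end.

Definition par_nf (p q : option soup) : option soup :=
  match p, q with Some a, Some b => Some (a ++ b) | _, _ => None end.

(* [None] marks a sequential composition with an operand made of two or more
   parallel threads, which is not a multiset of threads. *)
Fixpoint nf (P : proc) : option soup :=
  match P with
  | Eps => Some [::]
  | Cst c => Some [:: [:: c]]
  | Seq P Q => seq_nf (nf P) (nf Q)
  | Par P Q => par_nf (nf P) (nf Q)
  end.

Definition operm (p q : option soup) : Prop :=
  match p, q with
  | Some a, Some b => Permutation a b
  | None, None => True
  | _, _ => False
  end.

Lemma operm_refl p : operm p p.
Proof. by case: p => //= a; apply: Permutation_refl. Qed.

Lemma operm_sym p q : operm p q -> operm q p.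
Proof. by case: p; case: q => //= a b; apply: Permutation_sym. Qed.

Lemma operm_trans p q r : operm p q -> operm q r -> operm p r.
Proof. by case: p; case: q; case: r => //= a b c; apply: Permutation_trans. Qed.

Lemma Permutation_small (a b : soup) : Permutation a b ->
  [\/ a = [::] /\ b = [::], exists t, a = [:: t] /\ b = [:: t]
    | exists t1 t2 r t1' t2' r', a = t1 :: t2 :: r /\ b = t1' :: t2' :: r'].
Proof.
move=> H; have /= := Permutation_length H.
case: a H => [|t [|t2 a]]; case: b => [|t' [|t2' b]] //= H _.
- by constructor 1.
- by constructor 2; exists t; rewrite (Permutation_length_1_inv H).
- by constructor 3; do 6 eexists.
Qed.

Lemma seq_nfA p q r : seq_nf (seq_nf p q) r = seq_nf p (seq_nf q r).
Proof.
case: p => [[|a [|a2 p]]|]; case: q => [[|b [|b2 q]]|];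
  case: r => [[|c [|c2 r]]|] //=; by rewrite catA.
Qed.

Lemma seq_nf0r p : seq_nf p (Some [::]) = p.
Proof. by case: p => [[|a [|a2 p]]|]. Qed.

Lemma operm_seq_nf p p' q q' : operm p p' -> operm q q' ->
  operm (seq_nf p q) (seq_nf p' q').
Proof.
case: p => [a|]; case: p' => [a'|] //=; last first.
  by move=> _; case: q => [b|]; case: q' => [b'|] //= /Permutation_small
    [[-> ->]|[t [-> ->]]|[? [? [? [? [? [? [-> ->]]]]]]]].
move=> Ha; case: q => [b|]; case: q' => [b'|] //=; last first.
  by case: (Permutation_small Ha) => [[-> ->]|[t [-> ->]]|[? [? [? [? [? [? [-> ->]]]]]]]].
move=> Hb.
case: (Permutation_small Ha) => [[? ?]|[t [? ?]]|[? [? [? [? [? [? [? ?]]]]]]]];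
case: (Permutation_small Hb) => [[? ?]|[t' [? ?]]|[? [? [? [? [? [? [? ?]]]]]]]];
  subst => //=; exact: Permutation_refl.
Qed.

Lemma par_nf0r p : par_nf p (Some [::]) = p.
Proof. by case: p => //= a; rewrite cats0. Qed.

Lemma par_nfA p q r : par_nf (par_nf p q) r = par_nf p (par_nf q r).
Proof. by case: p; case: q; case: r => //= *; rewrite catA. Qed.

Lemma operm_par_nfC p q : operm (par_nf p q) (par_nf q p).
Proof. by case: p; case: q => //= *; apply: Permutation_app_comm. Qed.

Lemma operm_par_nf p p' q q' : operm p p' -> operm q q' ->
  operm (par_nf p q) (par_nf p' q').
Proof. by case: p; case: p' => //; case: q; case: q' => //= *; apply: Permutation_app. Qed.

Lemma operm_nf_scong P Q : scong P Q -> operm (nf P) (nf Q).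
Proof.
elim=> {P Q} /=.
- by move=> P; apply: operm_refl.
- by move=> P Q _; apply: operm_sym.
- by move=> P Q R _ H1 _; apply: operm_trans.
- by move=> P P' Q Q' _ H1 _; apply: operm_seq_nf.
- by move=> P P' Q Q' _ H1 _; apply: operm_par_nf.
- by move=> P Q R; rewrite seq_nfA; apply: operm_refl.
- by move=> P Q R; rewrite par_nfA; apply: operm_refl.
- by move=> P Q; apply: operm_par_nfC.
- by move=> P; apply: operm_refl.
- by move=> P; rewrite seq_nf0r; apply: operm_refl.
- by move=> P; case: (nf P) => //= a; apply: Permutation_refl.
Qed.

Lemma seq_nf_eq0 p q : seq_nf p q = Some [::] -> p = Some [::] /\ q = Some [::].
Proof. by case: p => [[|a [|a2 p]]|]; case: q => [[|b [|b2 q]]|]. Qed.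

Lemma par_nf_eq0 p q : par_nf p q = Some [::] -> p = Some [::] /\ q = Some [::].
Proof. by case: p => [[|a p]|]; case: q => [[|b q]|]. Qed.

Definition soup_of (t : thread) : soup := if t is [::] then [::] else [:: t].

Definition wf_soup (ts : soup) : bool := all (fun t : thread => 0 < size t) ts.

Lemma wf_soup_perm a b : Permutation a b -> wf_soup a = wf_soup b.
Proof.
elim=> [//|x l l' _ IH|x y l|l l' l'' _ -> //] /=; first by rewrite IH.
by rewrite andbCA.
Qed.

Lemma wf_soup_nf P ts : nf P = Some ts -> wf_soup ts.
Proof.
elim: P ts => [|c|P IHP Q IHQ|P IHP Q IHQ] ts /=.
- by case=> <-.
- by case=> <-.
- case EP: (nf P) => [[|a [|a2 p]]|]; case EQ: (nf Q) => [[|b [|b2 q]]|] //= [<-];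
    try (by apply: IHQ); try (by apply: IHP).
  have /andP [Ha _] := IHP _ EP.
  by rewrite /= size_cat addn_gt0 Ha.
- case EP: (nf P) => [a|]; case EQ: (nf Q) => [b|] //= [<-].
  by rewrite /wf_soup all_cat -/(wf_soup a) -/(wf_soup b) (IHP _ EP) (IHQ _ EQ).
Qed.

Lemma seq_nf_soup_of rest t : 0 < size t ->
  seq_nf (Some (soup_of rest)) (Some [:: t]) = Some (soup_of (rest ++ t)).
Proof. by case: rest => //; case: t. Qed.

Lemma soup_of_nonempty t : 0 < size t -> soup_of t = [:: t].
Proof. by case: t. Qed.

Definition proc_of_soup (ts : soup) : proc :=
  foldr (fun t acc => Par (seqp t) acc) Eps ts.

Lemma nf_seqp t : nf (seqp t) = Some (soup_of t).
Proof. by elim: t => [|c t IH] //=; rewrite IH; case: t {IH}. Qed.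

Lemma nf_proc_of_soup ts : wf_soup ts -> nf (proc_of_soup ts) = Some ts.
Proof.
elim: ts => [|t ts IH] //= /andP [Ht /IH]; rewrite nf_seqp => ->.
by case: t Ht.
Qed.

Lemma scong_par_proc_of_soup a b :
  scong (Par (proc_of_soup a) (proc_of_soup b)) (proc_of_soup (a ++ b)).
Proof.
elim: a => [|t a IH] /=; first exact: sc_par0l.
by apply: sc_trans (sc_parA _ _ _) _; apply: sc_par => //; apply: sc_refl.
Qed.

Lemma scong_seq_seqp (t t' : thread) : scong (Seq (seqp t) (seqp t')) (seqp (t ++ t')).
Proof.
elim: t => [|c t IH] /=; first exact: sc_seq0l.
by apply: sc_trans (sc_seqA _ _ _) _; apply: sc_seq => //; apply: sc_refl.
Qed.

Lemma scong_proc_of_soup1 t : scong (proc_of_soup [:: t]) (seqp t).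
Proof. by apply: sc_trans (sc_parC _ _) _; apply: sc_par0l. Qed.

Lemma scong_proc_of_soup_perm a b :
  Permutation a b -> scong (proc_of_soup a) (proc_of_soup b).
Proof.
elim=> [|x l l' _ IH|x y l|l l' l'' _ IH1 _ IH2] /=.
- exact: sc_refl.
- by apply: sc_par => //; apply: sc_refl.
- apply: sc_trans (sc_sym (sc_parA _ _ _)) _.
  by apply: sc_trans (sc_par (sc_parC _ _) (sc_refl _)) _; apply: sc_parA.
- exact: sc_trans IH1 IH2.
Qed.

Lemma scong_proc_of_nf P ts : nf P = Some ts -> scong P (proc_of_soup ts).
Proof.
elim: P ts => [|c|P IHP Q IHQ|P IHP Q IHQ] ts /=.
- by case=> <-; apply: sc_refl.
- case=> <- /=; apply: sc_sym; apply: sc_trans (sc_parC _ _) _.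
  by apply: sc_trans (sc_par0l _) _; apply: sc_seq0r.
- case EP: (nf P) => [[|a [|a2 p]]|]; case EQ: (nf Q) => [[|b [|b2 q]]|] //= [<-];
   try (apply: sc_trans (sc_seq (IHP _ EP) (sc_refl Q)) _;
        apply: sc_trans (sc_seq0l _) _; by apply: IHQ);
   try (apply: sc_trans (sc_seq (sc_refl P) (IHQ _ EQ)) _;
        apply: sc_trans (sc_seq0r _) _; by apply: IHP).
  apply: sc_trans (sc_seq (sc_trans (IHP _ EP) (scong_proc_of_soup1 a))
                          (sc_trans (IHQ _ EQ) (scong_proc_of_soup1 b))) _.
  by apply: sc_trans (scong_seq_seqp _ _) _; apply: sc_sym; apply: scong_proc_of_soup1.
- case EP: (nf P) => [a|]; case EQ: (nf Q) => [b|] //= [<-].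
  by apply: sc_trans (sc_par (IHP _ EP) (IHQ _ EQ)) _; apply: scong_par_proc_of_soup.
Qed.

Definition has_nf (P : proc) (L : soup) : Prop := operm (nf P) (Some L).

Lemma has_nf_wf P L : has_nf P L -> wf_soup L.
Proof.
rewrite /has_nf; case E: (nf P) => [ts|] //= H.
by rewrite -(wf_soup_perm H); apply: wf_soup_nf E.
Qed.

Lemma has_nf_perm P L L' : has_nf P L -> Permutation L L' -> has_nf P L'.
Proof. by rewrite /has_nf; case: (nf P) => //= ts; apply: Permutation_trans. Qed.

Lemma has_nf_swap P t t' L : has_nf P (t :: t' :: L) -> has_nf P (t' :: t :: L).
Proof. by move=> H; apply: has_nf_perm H (perm_swap _ _ _). Qed.

Lemma has_nf_scong P Q L : has_nf P L -> has_nf Q L -> scong P Q.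
Proof.
rewrite /has_nf; case EP: (nf P) => [a|] //; case EQ: (nf Q) => [b|] //= Ha Hb.
apply: sc_trans (scong_proc_of_nf EP) _; apply: sc_sym.
apply: sc_trans (scong_proc_of_nf EQ) _; apply: scong_proc_of_soup_perm.
by apply: Permutation_trans Hb _; apply: Permutation_sym.
Qed.
End NormalForm.

Section Semantics.
Variables (Sg : eqType) (n : nat) (u v : 'I_n -> seq Sg).
Notation const := (const Sg n).
Notation proc := (proc Sg n).
Notation thread := (seq const).
Notation soup := (seq thread).
Notation step := (step u v).
Notation rule := (rule u v).
Notation tsteps := (tsteps u v).

Lemma tsteps1 P P' : step P tau P' -> tsteps P P'.
Proof. by move=> H; apply: ts_step H (ts_refl _ _ _). Qed.

Lemma tsteps_trans P Q R : tsteps P Q -> tsteps Q R -> tsteps P R.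
Proof. by elim=> // P0 P1 Q0 H _ IH /IH; apply: ts_step. Qed.

Lemma step_nf_nil P l P' : step P l P' -> nf P = Some [::] -> False.
Proof.
elim=> {P l P'} //=.
- by move=> P l P' Q _ IH /seq_nf_eq0 [] /IH.
- by move=> P l P' Q _ IH /par_nf_eq0 [] /IH.
- by move=> P l P' Q _ IH /par_nf_eq0 [] _ /IH.
- move=> P P1 l P2 P' /operm_nf_scong + _ IH _ E; rewrite E.
  by case E1: (nf P1) => [b|] //= /Permutation_nil E0; apply: IH; rewrite E1 E0.
Qed.

Definition after_nf (R : proc) (rest : thread) (others : soup) : option soup :=
  par_nf (seq_nf (nf R) (Some (soup_of rest))) (Some others).

Definition fired_nf (l : act Sg n) (ts : soup) (P' : proc) : Prop :=
  exists c rest others R, [/\ Permutation ts ((c :: rest) :: others), rule c l R &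
    operm (nf P') (after_nf R rest others)].

Lemma fired_nf_perm l ts ts' P' : Permutation ts ts' -> fired_nf l ts P' -> fired_nf l ts' P'.
Proof.
move=> H [c [rest [others [R [Hp Hr Ho]]]]]; exists c, rest, others, R; split => //.
by apply: Permutation_trans Hp; apply: Permutation_sym.
Qed.

Lemma fired_nf_seq P Q l P' ts : step P l P' ->
  (forall ts, nf P = Some ts -> fired_nf l ts P') ->
  nf (Seq P Q) = Some ts -> fired_nf l ts (Seq P' Q).
Proof.
move=> Hs IH /=; case EP: (nf P) => [[|a [|a2 p]]|]; first by case: (step_nf_nil Hs EP).
- case EQ: (nf Q) => [[|b [|b2 q]]|] //= [<-].
    have [c [rest [others [R [Hp Hr Ho]]]]] := IH _ EP.
    by exists c, rest, others, R; rewrite /= EQ seq_nf0r.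
  have [c [rest [others [R [Hp Hr Ho]]]]] := IH _ EP.
  have [Ea Eo] := Permutation_length_1_inv Hp; subst.
  exists c, (rest ++ b), [::], R; split => //.
  move: Ho; rewrite /after_nf !par_nf0r => Ho.
  have /andP [Hb _] : wf_soup [:: b] by apply: wf_soup_nf EQ.
  rewrite -seq_nf_soup_of // -seq_nfA /= EQ.
  exact: operm_seq_nf Ho (operm_refl _).
- case EQ: (nf Q) => [[|b [|b2 q]]|] //= [<-].
  have [c [rest [others [R [Hp Hr Ho]]]]] := IH _ EP.
  by exists c, rest, others, R; rewrite /= EQ seq_nf0r.
- by case: (nf Q) => [[|b [|b2 q]]|].
Qed.

Lemma fired_nf_parl P Q l P' ts : (forall ts, nf P = Some ts -> fired_nf l ts P') ->
  nf (Par P Q) = Some ts -> fired_nf l ts (Par P' Q).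
Proof.
move=> IH /=; case EP: (nf P) => [a|] //; case EQ: (nf Q) => [b|] //= [<-].
have [c [rest [others [R [Hp Hr Ho]]]]] := IH _ EP.
exists c, rest, (others ++ b), R; split => //; first exact: (Permutation_app_tail b Hp).
rewrite /after_nf -[Some (others ++ b)]/(par_nf (Some others) (Some b)) -par_nfA.
by rewrite [nf _]/= EQ; apply: operm_par_nf Ho (operm_refl _).
Qed.

Lemma fired_nf_parr P Q l P' ts : (forall ts, nf P = Some ts -> fired_nf l ts P') ->
  nf (Par Q P) = Some ts -> fired_nf l ts (Par Q P').
Proof.
move=> IH /=; case EP: (nf P) => [a|] //; case EQ: (nf Q) => [b|] //= [<-].
have ENF : nf (Par P Q) = Some (a ++ b) by rewrite /= EP EQ.
have [c [rest [others [R [Hp Hr Ho]]]]] := fired_nf_parl IH ENF.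
exists c, rest, others, R; split => //.
  exact: Permutation_trans (Permutation_app_comm _ _) Hp.
exact: operm_trans (operm_par_nfC _ _) Ho.
Qed.

Lemma step_nf_inv P l P' : step P l P' -> forall ts, nf P = Some ts -> fired_nf l ts P'.
Proof.
elim=> {P l P'}.
- move=> c l P H ts /= [<-]; exists c, [::], [::], P; split => //.
  by rewrite /after_nf /= seq_nf0r par_nf0r; apply: operm_refl.
- by move=> P l P' Q Hs IH ts; apply: fired_nf_seq.
- by move=> P l P' Q _ IH ts; apply: fired_nf_parl.
- by move=> P l P' Q _ IH ts; apply: fired_nf_parr.
- move=> P P1 l P2 P' /operm_nf_scong H1 _ IH /operm_nf_scong H2 ts E.
  move: H1; rewrite E; case E1: (nf P1) => [ts1|] //= Hp.
  have [c [rest [others [R [Hp' Hr Ho]]]]] := fired_nf_perm (Permutation_sym Hp) (IH _ E1).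
  by exists c, rest, others, R; split => //; apply: operm_trans Ho; apply: operm_sym.
Qed.

Lemma has_nf_step_inv P l P' L : step P l P' -> has_nf P L -> fired_nf l L P'.
Proof.
rewrite /has_nf => Hs; case E: (nf P) => [ts|] //= Hp.
exact: fired_nf_perm Hp (step_nf_inv Hs E).
Qed.

Lemma has_nf_step Q c rest others l R : has_nf Q ((c :: rest) :: others) -> rule c l R ->
  exists Q', step Q l Q' /\ operm (nf Q') (after_nf R rest others).
Proof.
move=> HQ Hr; have /andP [_ Ho] := has_nf_wf HQ.
move: HQ; rewrite /has_nf; case E: (nf Q) => [ts|] //= Hp.
exists (Par (Seq R (seqp rest)) (proc_of_soup others)); split.
  apply: (st_cong (sc_trans (scong_proc_of_nf E) (scong_proc_of_soup_perm Hp))) _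
    (sc_refl _).
  exact/st_parl/st_seq/st_rule.
by rewrite /= nf_seqp nf_proc_of_soup //; apply: operm_refl.
Qed.

Lemma after_nf_Cst d rest others :
  after_nf (Cst d) rest others = Some ((d :: rest) :: others).
Proof. by case: rest. Qed.

Lemma after_nf_Seq d1 d2 rest others :
  after_nf (Seq (Cst d1) (Cst d2)) rest others = Some ((d1 :: d2 :: rest) :: others).
Proof. by case: rest. Qed.

Lemma after_nf_Eps rest others : after_nf Eps rest others = Some (soup_of rest ++ others).
Proof. by []. Qed.

Lemma step_head_Cst Q c rest others l d : has_nf Q ((c :: rest) :: others) ->
  rule c l (Cst d) -> exists Q', step Q l Q' /\ has_nf Q' ((d :: rest) :: others).
Proof.
by move=> H1 H2; have [Q' [H3 H4]] := has_nf_step H1 H2; exists Q'; rewrite /has_nf -after_nf_Cst.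
Qed.

Lemma step_head_Seq Q c rest others l d1 d2 : has_nf Q ((c :: rest) :: others) ->
  rule c l (Seq (Cst d1) (Cst d2)) ->
  exists Q', step Q l Q' /\ has_nf Q' ((d1 :: d2 :: rest) :: others).
Proof.
by move=> H1 H2; have [Q' [H3 H4]] := has_nf_step H1 H2; exists Q'; rewrite /has_nf -after_nf_Seq.
Qed.

Lemma step_head_Eps Q c rest others l : has_nf Q ((c :: rest) :: others) ->
  rule c l Eps -> exists Q', step Q l Q' /\ has_nf Q' (soup_of rest ++ others).
Proof.
by move=> H1 H2; have [Q' [H3 H4]] := has_nf_step H1 H2; exists Q'; rewrite /has_nf -after_nf_Eps.
Qed.

Lemma step_head_Par Q c others l d1 d2 : has_nf Q ([:: c] :: others) ->
  rule c l (Par (Cst d1) (Cst d2)) ->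
  exists Q', step Q l Q' /\ has_nf Q' ([:: d1] :: [:: d2] :: others).
Proof. by move=> H1 H2; have [Q' [H3 H4]] := has_nf_step H1 H2; exists Q'. Qed.
End Semantics.


Section Bisimulation.
Variables (Sg : eqType) (n : nat) (u v : 'I_n -> seq Sg).
Notation proc := (proc Sg n).
Notation step := (step u v).
Notation tsteps := (tsteps u v).
Implicit Types (R : proc -> proc -> Prop) (P Q : proc).

Definition branching_match R P Q l P' : Prop :=
  (exists Q'' Q', [/\ tsteps Q Q'', step Q'' l Q', R P Q'' & R P' Q']) \/
  (l = tau /\ R P' Q).

Lemma branching_match_mono R R' P Q l P' : (forall P Q, R P Q -> R' P Q) ->
  branching_match R P Q l P' -> branching_match R' P Q l P'.
Proof.
move=> sRR' [[Q'' [Q' [T S H1 H2]]]|[El H]]; last by right; split; last apply: sRR'.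
by left; exists Q'', Q'; split => //; apply: sRR'.
Qed.

Lemma branching_bisimulation_sym R : (forall P Q, R P Q -> R Q P) ->
  (forall P Q l P', R P Q -> step P l P' -> branching_match R P Q l P') ->
  branching_bisimulation u v R.
Proof.
move=> symR matchR P Q H; split => [l P' /(matchR _ _ _ _ H)|l Q'].
  by case=> [[Q'' [Q' [T S H1 H2]]]|[El H1]]; [left; exists Q'', Q' | right].
move=> /(matchR _ _ _ _ (symR _ _ H)) [[P'' [P' [T S H1 H2]]]|[El H1]].
  by left; exists P'', P'; split => //; apply: symR.
by right; split => //; apply: symR.
Qed.

Lemma scong_match P Q l P' : scong P Q -> step P l P' -> branching_match (@scong Sg n) P Q l P'.
Proof.
move=> H Hs; left; exists Q, P'; split; first exact: ts_refl.
- exact: st_cong (sc_sym H) Hs (sc_refl _).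
- exact: H.
- exact: sc_refl.
Qed.

Lemma wstep_tsteps_step Q Q'' l Q' : tsteps Q Q'' -> step Q'' l Q' -> wstep u v Q l Q'.
Proof.
move=> T S; case: l S => [||||||k|a|] S /=; try by exists Q'', Q'; split => //; apply: ts_refl.
exact: tsteps_trans T (tsteps1 S).
Qed.

Lemma branching_bisimulation_weak R :
  branching_bisimulation u v R -> weak_bisimulation u v R.
Proof.
move=> bR P Q /bR [H1 H2]; split => [l P' /H1 | l Q' /H2].
  case=> [[Q'' [Q' [T S _ H]]]|[-> H]]; last by exists Q; split => //; apply: ts_refl.
  by exists Q'; split => //; apply: wstep_tsteps_step T S.
case=> [[P'' [P' [T S _ H]]]|[-> H]]; last by exists P; split => //; apply: ts_refl.
by exists P'; split => //; apply: wstep_tsteps_step T S.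
Qed.

Lemma weak_bisimulation_flip R :
  weak_bisimulation u v R -> weak_bisimulation u v (fun P Q => R Q P).
Proof. by move=> wR P Q /wR []. Qed.

Lemma weak_bisimulation_tsteps R P Q P1 : weak_bisimulation u v R -> R P Q ->
  tsteps P P1 -> exists Q1, tsteps Q Q1 /\ R P1 Q1.
Proof.
move=> wR HR T; elim: T Q HR => [P0|P0 P2 Q0 H T IH] Q HR.
  by exists Q; split => //; apply: ts_refl.
have [Q2 [W2 R2]] := (wR _ _ HR).1 _ _ H.
have [Q1 [T1 R1]] := IH _ R2; exists Q1; split => //; exact: tsteps_trans W2 T1.
Qed.

Lemma branching_bisimilar_weakly P Q :
  branching_bisimilar u v P Q -> weakly_bisimilar u v P Q.
Proof. by case=> R [/branching_bisimulation_weak wR HR]; exists R. Qed.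
End Bisimulation.
Section Garbage.
Variables (Sg : eqType) (n : nat) (u v : 'I_n -> seq Sg).
Notation const := (const Sg n).
Notation proc := (proc Sg n).
Notation thread := (seq const).
Notation soup := (seq thread).
Notation step := (step u v).
Notation rule := (rule u v).
Notation tsteps := (tsteps u v).
Notation validW := (validW u v).

Lemma validW_behead a w : validW (a :: w) -> validW w.
Proof.
case=> k [[p E]|[p E]]; exists k; [left|right]; exists (rcons p a);
  by rewrite E cat_rcons.
Qed.

Lemma validW_u k : validW (u k).
Proof. by exists k; left; exists [::]. Qed.

Lemma validW_v k : validW (v k).
Proof. by exists k; right; exists [::]. Qed.

Definition plain_const (e : const) : Prop :=
  match e with cU _ | cV _ => True | cW w _ => validW w | _ => False end.

Fixpoint plain (t : thread) : Prop :=
  if t is e :: t' then plain_const e /\ plain t' else True.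

Lemma plain_cat a b : plain (a ++ b) <-> plain a /\ plain b.
Proof. by elim: a => [|e a IH] /=; [tauto | rewrite IH; tauto]. Qed.

Lemma plain_map_UV (ps : seq ('I_n + 'I_n)) : plain (map (@UV Sg n) ps).
Proof. by elim: ps => [|[k|k] ps IH]. Qed.

Lemma plain_map_U (ks : seq 'I_n) : plain (map (@cU Sg n) ks).
Proof. by elim: ks. Qed.

Lemma plain_map_V (ks : seq 'I_n) : plain (map (@cV Sg n) ks).
Proof. by elim: ks. Qed.

Lemma tsteps_kill_W0 w rest others Q : validW w ->
  has_nf Q ((cW w None :: rest) :: others) ->
  exists Q', tsteps Q Q' /\ has_nf Q' (soup_of rest ++ others).
Proof.
elim: w Q => [|a w IH] Q Hv HQ.
  by have [Q' [H1 H2]] := step_head_Eps HQ (r_W5 u v); exists Q'; split => //; apply: tsteps1.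
have [Q1 [H1 H2]] := step_head_Cst HQ (r_W3 None Hv).
have [Q' [H3 H4]] := IH _ (validW_behead Hv) H2.
by exists Q'; split => //; apply: ts_step H1 H3.
Qed.

Lemma tsteps_kill_W w ko rest others Q : validW w ->
  has_nf Q ((cW w ko :: rest) :: others) ->
  exists Q', tsteps Q Q' /\ has_nf Q' (soup_of rest ++ others).
Proof.
case: ko => [k|]; last exact: tsteps_kill_W0.
move=> Hv HQ; have [Q1 [H1 H2]] := step_head_Cst HQ (r_W4 k Hv).
have [Q' [H3 H4]] := tsteps_kill_W0 Hv H2.
by exists Q'; split => //; apply: ts_step H1 H3.
Qed.

Lemma tsteps_kill_plain_const e rest others Q : plain_const e ->
  has_nf Q ((e :: rest) :: others) ->
  exists Q', tsteps Q Q' /\ has_nf Q' (soup_of rest ++ others).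
Proof.
case: e => // [k|k|w ko] He HQ; last exact: tsteps_kill_W He HQ.
- have [Q1 [H1 H2]] := step_head_Cst HQ (r_U u v k).
  have [Q' [H3 H4]] := tsteps_kill_W (validW_u k) H2.
  by exists Q'; split => //; apply: ts_step H1 H3.
- have [Q1 [H1 H2]] := step_head_Cst HQ (r_V u v k).
  have [Q' [H3 H4]] := tsteps_kill_W (validW_v k) H2.
  by exists Q'; split => //; apply: ts_step H1 H3.
Qed.

Lemma tsteps_kill_plain t others Q : plain t -> has_nf Q (soup_of t ++ others) ->
  exists Q', tsteps Q Q' /\ has_nf Q' others.
Proof.
elim: t Q => [|e t IH] Q /=; first by move=> _ HQ; exists Q; split => //; apply: ts_refl.
move=> [He Ht] HQ; have [Q1 [H1 H2]] := tsteps_kill_plain_const He HQ.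
have [Q' [H3 H4]] := IH _ Ht H2.
by exists Q'; split => //; apply: tsteps_trans H1 H3.
Qed.

(* The threads that C' can both create and dissolve by tau-steps. *)
Definition disposable (t : thread) : Prop :=
  plain t \/ exists h t', [/\ t = h :: t', h = cGv \/ h = cZ \/ h = cG' & plain t'].

Fixpoint disposable_soup (gs : soup) : Prop :=
  if gs is g :: gs' then [/\ 0 < size g, disposable g & disposable_soup gs'] else True.

Lemma disposable_soup_cat a b :
  disposable_soup (a ++ b) <-> disposable_soup a /\ disposable_soup b.
Proof.
elim: a => [|g a IH] /=; first tauto.
split=> [[Hs Hg /IH [Ha Hb]] | [[Hs Hg Ha] Hb]]; first by [].
by split => //; apply/IH.
Qed.

Lemma disposable_soup_perm a b : Permutation a b -> disposable_soup a -> disposable_soup b.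
Proof.
by elim=> //= [x l l' _ IH [H1 H2 H3] | x y l [H1 H2 [H3 H4 H5]] | l l' l'' _ IH1 _ IH2 H];
  [split; auto | | auto].
Qed.

Lemma disposable_soup_of t : disposable t -> disposable_soup (soup_of t).
Proof. by case: t. Qed.

Lemma tsteps_kill_disposable g others Q : 0 < size g -> disposable g ->
  has_nf Q (g :: others) -> exists Q', tsteps Q Q' /\ has_nf Q' others.
Proof.
move=> Hs [Hp|[h [t [-> Hh Ht]]]] HQ.
  by apply: tsteps_kill_plain Hp _; rewrite soup_of_nonempty.
have [Q1 [T1 N1]] : exists Q1, tsteps Q Q1 /\ has_nf Q1 (soup_of t ++ others).
  case: Hh HQ => [|[|]] -> HQ.
  - by have [Q1 [S1 N1]] := step_head_Eps HQ (r_Gv2 u v); exists Q1; split => //; apply: tsteps1.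
  - by have [Q1 [S1 N1]] := step_head_Eps HQ (r_Z1 u v); exists Q1; split => //; apply: tsteps1.
  - have [Q0 [S0 N0]] := step_head_Cst HQ (r_G'5 u v).
    have [Q1 [S1 N1]] := step_head_Eps N0 (r_Z1 u v).
    by exists Q1; split => //; apply: ts_step S0 (tsteps1 S1).
have [Q' [T2 N2]] := tsteps_kill_plain Ht N1.
by exists Q'; split => //; apply: tsteps_trans T1 T2.
Qed.

Lemma tsteps_kill_all hs Q : disposable_soup hs -> has_nf Q ([:: cC'] :: hs) ->
  exists Q', tsteps Q Q' /\ has_nf Q' [:: [:: cC']].
Proof.
elim: hs Q => [|h hs IH] Q /=; first by move=> _ HQ; exists Q; split => //; apply: ts_refl.
move=> [Hs Hh Hhs] /has_nf_swap HQ; have [Q1 [H1 H2]] := tsteps_kill_disposable Hs Hh HQ.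
have [Q' [H3 H4]] := IH _ Hhs H2.
by exists Q'; split => //; apply: tsteps_trans H1 H3.
Qed.

Lemma tsteps_grow_G' t others Q : plain t -> has_nf Q ([:: cG'] :: others) ->
  exists Q', tsteps Q Q' /\ has_nf Q' ((cG' :: t) :: others).
Proof.
elim: t => [|e t IH] /=; first by move=> _ HQ; exists Q; split => //; apply: ts_refl.
move=> [He Ht] HQ; have [Q1 [H1 H2]] := IH Ht HQ.
have [Q' [H3 H4]] : exists Q', step Q1 tau Q' /\ has_nf Q' ((cG' :: e :: t) :: others).
  case: e He => // [k|k|w ko] He.
  - exact: step_head_Seq H2 (r_G'1 u v k).
  - exact: step_head_Seq H2 (r_G'2 u v k).
  - exact: step_head_Seq H2 (r_G'3 ko He).
by exists Q'; split => //; apply: tsteps_trans H1 (tsteps1 H3).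
Qed.

Lemma tsteps_spawn g hs Q : 0 < size g -> disposable g -> has_nf Q ([:: cC'] :: hs) ->
  exists Q', tsteps Q Q' /\ has_nf Q' ([:: cC'] :: g :: hs).
Proof.
move=> Hs Hg HQ; have [Q1 [S1 /has_nf_swap N1]] := step_head_Par HQ (r_C'1 u v).
suff [Q' [T' N']] : exists Q', tsteps Q1 Q' /\ has_nf Q' (g :: [:: cC'] :: hs).
  by exists Q'; split; [apply: ts_step S1 T' | apply: has_nf_swap].
case: Hg => [Hp|[h [t [Eg Hh Ht]]]].
  have [Q2 [T2 N2]] := tsteps_grow_G' Hp N1.
  have [Q3 [S3 N3]] := step_head_Cst N2 (r_G'5 u v).
  have [Q4 [S4 N4]] := step_head_Eps N3 (r_Z1 u v).
  exists Q4; split; first exact: tsteps_trans T2 (ts_step S3 (tsteps1 S4)).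
  by rewrite soup_of_nonempty in N4.
subst g; have [Q2 [T2 N2]] := tsteps_grow_G' Ht N1.
case: Hh N2 => [|[|]] -> N2; last by exists Q2.
- have [Q3 [S3 N3]] := step_head_Cst N2 (r_G'4 u v).
  by exists Q3; split => //; apply: tsteps_trans T2 (tsteps1 S3).
- have [Q3 [S3 N3]] := step_head_Cst N2 (r_G'5 u v).
  by exists Q3; split => //; apply: tsteps_trans T2 (tsteps1 S3).
Qed.

Lemma tsteps_spawn_all gs Q : disposable_soup gs -> has_nf Q [:: [:: cC']] ->
  exists Q', tsteps Q Q' /\ has_nf Q' ([:: cC'] :: gs).
Proof.
elim: gs Q => [|g gs IH] Q /=; first by move=> _ HQ; exists Q; split => //; apply: ts_refl.
move=> [Hs Hg Hgs] HQ; have [Q1 [H1 H2]] := IH _ Hgs HQ.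
have [Q' [H3 H4]] := tsteps_spawn Hs Hg H2.
by exists Q'; split => //; apply: tsteps_trans H1 H3.
Qed.

Lemma tsteps_respawn hs gs Q : disposable_soup hs -> disposable_soup gs ->
  has_nf Q ([:: cC'] :: hs) -> exists Q', tsteps Q Q' /\ has_nf Q' ([:: cC'] :: gs).
Proof.
move=> Hh Hg HQ; have [Q1 [H1 H2]] := tsteps_kill_all Hh HQ.
have [Q' [H3 H4]] := tsteps_spawn_all Hg H2.
by exists Q'; split => //; apply: tsteps_trans H1 H3.
Qed.
End Garbage.

Section Finished.
Variables (Sg : eqType) (n : nat) (u v : 'I_n -> seq Sg).
Notation const := (const Sg n).
Notation proc := (proc Sg n).
Notation thread := (seq const).
Notation soup := (seq thread).
Notation step := (step u v).
Notation rule := (rule u v).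
Notation tsteps := (tsteps u v).
Notation plain := (plain u v).
Notation disposable := (disposable u v).
Notation disposable_soup := (disposable_soup u v).

Lemma disposable_step c rest l R others : disposable (c :: rest) -> rule c l R ->
  exists gs, after_nf R rest others = Some (gs ++ others) /\ disposable_soup gs.
Proof.
have Cst_case d : disposable (d :: rest) ->
    exists gs, after_nf (Cst d) rest others = Some (gs ++ others) /\ disposable_soup gs.
  by move=> H; exists [:: d :: rest]; rewrite after_nf_Cst.
have Seq_case d1 d2 : disposable (d1 :: d2 :: rest) -> exists gs,
    after_nf (Seq (Cst d1) (Cst d2)) rest others = Some (gs ++ others) /\ disposable_soup gs.
  by move=> H; exists [:: d1 :: d2 :: rest]; rewrite after_nf_Seq.
have Eps_case : plain rest ->
    exists gs, after_nf Eps rest others = Some (gs ++ others) /\ disposable_soup gs.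
  by move=> H; exists (soup_of rest); split => //; apply/disposable_soup_of; left.
move=> [[Hc Hr]|[h [t [[-> <-] Hh Hr]]]] HR.
  case: c Hc HR => // [k|k|w ko] Hc HR; inversion HR; subst.
  - by apply: Cst_case; left; split => //; apply: validW_u.
  - by apply: Cst_case; left; split => //; apply: validW_v.
  - by apply: Cst_case; left; split => //; apply: validW_behead Hc.
  - by apply: Cst_case; left.
  - by apply: Cst_case; left; split => //; apply: validW_behead Hc.
  - by apply: Cst_case; left.
  - exact: Eps_case.
have head h' : h' = cGv \/ h' = cZ \/ h' = cG' -> disposable (h' :: rest).
  by move=> Hh'; right; exists h', rest; split.
case: Hh HR => [|[|]] -> HR; inversion HR; subst; try exact: Eps_case.
- by apply: Seq_case; right; exists cGv, (cV k :: rest); split => //; left.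
- by apply: Cst_case; apply: head; right; left.
- by apply: Seq_case; right; exists cG', (cU k :: rest); split => //; right; right.
- by apply: Seq_case; right; exists cG', (cV k :: rest); split => //; right; right.
- by apply: Seq_case; right; exists cG', (cW w ko :: rest); split => //; right; right.
- by apply: Cst_case; apply: head; left.
- by apply: Cst_case; apply: head; right; left.
Qed.

(* The states reached once the monitor has fired its second action. *)
Definition finished (P : proc) : Prop :=
  exists gs, has_nf P ([:: cC'] :: gs) /\ disposable_soup gs.

Lemma Permutation_finished_inv (gs others : soup) c rest :
  Permutation ([:: cC'] :: gs) ((c :: rest) :: others) ->
  (c = cC' /\ rest = [::] /\ Permutation others gs) \/
  (exists g1 g2, gs = g1 ++ (c :: rest) :: g2 /\ Permutation others ([:: cC'] :: g1 ++ g2)).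
Proof.
move=> H.
have : List.In (c :: rest) ([:: cC'] :: gs).
  by apply: Permutation_in (Permutation_sym H) _; apply: List.in_eq.
case=> [[Ec Erest]|Hin].
  by subst; left; do 2 split => //; apply: Permutation_sym; apply: Permutation_cons_inv H.
have [g1 [g2 Egs]] := List.in_split _ _ Hin; right; exists g1, g2; split => //; subst gs.
exact: (@Permutation_cons_app_inv _ others ([:: cC'] :: g1) g2 _ (Permutation_sym H)).
Qed.

Definition finished_rel (P Q : proc) : Prop := finished P /\ finished Q \/ scong P Q.

Lemma finished_match P Q l P' : finished P -> finished Q -> step P l P' ->
  branching_match u v finished_rel P Q l P'.
Proof.
move=> [gs [HP Hgs]] [hs [HQ Hhs]] Hs.
have [c [rest [others [R [Hp Hr Ho]]]]] := has_nf_step_inv Hs HP.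
case: (Permutation_finished_inv Hp) => [[Ec [Erest Hpo]]|[g1 [g2 [Egs Hpo]]]].
  subst c rest; inversion Hr; subst.
  - right; split => //; left; split; last by exists hs.
    exists ([:: cG'] :: others); split => //; split => //.
      by right; exists cG', [::]; split => //; right; right.
    by apply: disposable_soup_perm Hgs; apply: Permutation_sym.
  - left; have [Q'' [T1 N1]] := tsteps_respawn Hhs Hgs HQ.
    have [Q' [S1 N2]] := step_head_Eps N1 (r_C'2 u v).
    exists Q'', Q'; split => //; first by left; split; exists gs.
    by right; apply: (@has_nf_scong _ _ _ _ gs) N2; apply: has_nf_perm Ho Hpo.
subst gs; move: (Hgs) => /disposable_soup_cat [Hg1 [Hsz Hg Hg2]].
have [Q'' [T1 N1]] := tsteps_spawn Hsz Hg HQ.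
have [Q' [S1 N2]] := has_nf_step (has_nf_swap N1) Hr.
have [gs2 [E2 Hgs2]] := disposable_step ([:: cC'] :: hs) Hg Hr.
have [gs3 [E3 Hgs3]] := disposable_step others Hg Hr.
left; exists Q'', Q'; split => //.
  by left; split; [exists (g1 ++ (c :: rest) :: g2) | exists ((c :: rest) :: hs)].
left; split.
  exists (gs3 ++ g1 ++ g2); split; last first.
    by apply/disposable_soup_cat; split => //; apply/disposable_soup_cat.
  rewrite /has_nf E3 in Ho; apply: has_nf_perm Ho _.
  apply: Permutation_trans (Permutation_app_head _ Hpo) _.
  by apply: Permutation_sym; apply: Permutation_middle.
exists (gs2 ++ hs); split; last by apply/disposable_soup_cat.
rewrite /has_nf E2 in N2; apply: has_nf_perm N2 _.
by apply: Permutation_sym; apply: Permutation_middle.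
Qed.
End Finished.

Section Monitor.
Variables (Sg : eqType) (n : nat) (u v : 'I_n -> seq Sg).
Notation act := (act Sg n).
Notation const := (const Sg n).
Notation proc := (proc Sg n).
Notation thread := (seq const).
Notation step := (step u v).
Notation rule := (rule u v).
Notation tsteps := (tsteps u v).
Notation validW := (validW u v).
Notation plain := (plain u v).
Notation plain_const := (plain_const u v).
Notation label := (Sg + 'I_n)%type.

Definition act_of_label (o : label) : act :=
  match o with inl a => aL a | inr k => aN k end.

Lemma act_of_label_inj : injective act_of_label.
Proof. by case=> [a|k] [b|k'] //= [->]. Qed.

(* With the monitor I ([m = true]) index actions are absorbed and letters stay
   visible; with the monitor S it is the other way round. *)
Definition monitor (m : bool) : const := if m then cI else cS.

Definition visible (m : bool) (o : label) : bool := if o is inl _ then m else ~~ m.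

Definition obs (m : bool) (e : const) : seq label :=
  match e with
  | cU k => if m then map inl (u k) else [:: inr k]
  | cV k => if m then map inl (v k) else [:: inr k]
  | cW w ko => if m then map inl w else if ko is Some k then [:: inr k] else [::]
  | _ => [::]
  end.

Definition obs_thread (m : bool) (t : thread) : seq label := flatten (map (obs m) t).

Lemma obs_thread_cons m e t : obs_thread m (e :: t) = obs m e ++ obs_thread m t.
Proof. by []. Qed.

Lemma obs_thread_cat m a b : obs_thread m (a ++ b) = obs_thread m a ++ obs_thread m b.
Proof. by rewrite /obs_thread map_cat flatten_cat. Qed.

Lemma visible_obs_thread m t : all (visible m) (obs_thread m t).
Proof.
elim: t => [|e t IH] //; rewrite obs_thread_cons all_cat IH andbT.
by case: e => // [k|k|w [k|]]; case: (m) => //=; rewrite all_map; apply/allP.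
Qed.

Lemma monitor_absorbs m o : ~~ visible m o -> rule (monitor m) (act_of_label o) (Cst (monitor m)).
Proof. by case: o m => [a|k] [] //= _; constructor. Qed.

Lemma monitor_rule_inv m l R : rule (monitor m) l R ->
  [/\ [\/ l = lI, l = lS | exists2 o, l = act_of_label o & ~~ visible m o]
    & R = Cst (monitor m) \/ R = Cst cC'].
Proof.
case: m => /= HR; inversion HR; subst; split; try by [constructor 1 | constructor 2 | left | right].
- by constructor 3; exists (inr k).
- by constructor 3; exists (inl a).
Qed.

Lemma monitor_rule_quiet m l R : rule (monitor m) l R -> [/\ l <> tau, l <> lZ & l <> lV].
Proof. by case/monitor_rule_inv => [[->|->|[[a|k] -> _]] _]. Qed.

Lemma monitor_rule_visible m o R : visible m o -> ~ rule (monitor m) (act_of_label o) R.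
Proof.
move=> Ho /monitor_rule_inv [[E|E|[o' /act_of_label_inj <- Ho']] _].
- by case: o E {Ho}.
- by case: o E {Ho}.
- by rewrite Ho in Ho'.
Qed.

Definition monitored (m : bool) (P : proc) (x : thread) : Prop :=
  has_nf P ([:: monitor m] :: soup_of x).

Lemma monitored_cons m P e t :
  monitored m P (e :: t) <-> has_nf P ((e :: t) :: [:: [:: monitor m]]).
Proof. by split => /has_nf_swap. Qed.

Lemma monitored_soup_of m P t :
  has_nf P (soup_of t ++ [:: [:: monitor m]]) -> monitored m P t.
Proof. by move=> H; apply: has_nf_perm H (Permutation_app_comm _ _). Qed.

Lemma monitored_step_Cst m P e t l d : monitored m P (e :: t) -> rule e l (Cst d) ->
  exists P', step P l P' /\ monitored m P' (d :: t).
Proof. by move=> /monitored_cons H /(step_head_Cst H) [P' [S /monitored_cons]]; exists P'. Qed.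

Lemma monitored_step_Seq m P e t l d1 d2 : monitored m P (e :: t) ->
  rule e l (Seq (Cst d1) (Cst d2)) -> exists P', step P l P' /\ monitored m P' (d1 :: d2 :: t).
Proof. by move=> /monitored_cons H /(step_head_Seq H) [P' [S /monitored_cons]]; exists P'. Qed.

Lemma monitored_step_Eps m P e t l : monitored m P (e :: t) -> rule e l Eps ->
  exists P', step P l P' /\ monitored m P' t.
Proof. by move=> /monitored_cons H /(step_head_Eps H) [P' [S /monitored_soup_of]]; exists P'. Qed.

Lemma monitored_step_monitor m P x l d : monitored m P x -> rule (monitor m) l (Cst d) ->
  exists P', step P l P' /\ has_nf P' ([:: d] :: soup_of x).
Proof. exact: step_head_Cst. Qed.

Lemma monitored_kill_W m P w ko t : monitored m P (cW w ko :: t) -> validW w ->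
  exists P', tsteps P P' /\ monitored m P' t.
Proof.
move=> /monitored_cons H /tsteps_kill_W /(_ H) [P' [T /monitored_soup_of]].
by exists P'.
Qed.

Lemma monitored_step_inv m P x l P' : monitored m P x -> step P l P' ->
  (exists d, [/\ rule (monitor m) l (Cst d), d = monitor m \/ d = cC'
                & has_nf P' ([:: d] :: soup_of x)]) \/
  (exists c rest R, [/\ x = c :: rest, rule c l R
                      & operm (nf P') (after_nf R rest [:: [:: monitor m]])]).
Proof.
move=> Hx Hs; have [c [rest [others [R [Hp HR Ho]]]]] := has_nf_step_inv Hs Hx.
have monitor_case : c = monitor m -> rest = [::] -> exists d,
    [/\ rule (monitor m) l (Cst d), d = monitor m \/ d = cC' & has_nf P' ([:: d] :: others)].
  move=> Ec Erest; subst c rest; case: (monitor_rule_inv HR) => _ [] ER;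
    move: HR Ho; rewrite ER => HR Ho.
  - by exists (monitor m); split; [| left | rewrite /has_nf -after_nf_Cst].
  - by exists cC'; split; [| right | rewrite /has_nf -after_nf_Cst].
case: x Hx Hp => [|e x] Hx /= Hp.
  case: (Permutation_length_1_inv Hp) => Ec Erest Eo; subst others.
  by left; apply: monitor_case.
case: (Permutation_length_2_inv Hp) => [] [Ec Erest Eo]; subst others.
  by left; apply: monitor_case.
by subst; right; do 3 eexists; split; eauto.
Qed.

Lemma monitored_after_Cst m P d rest :
  operm (nf P) (after_nf (Cst d) rest [:: [:: monitor m]]) -> monitored m P (d :: rest).
Proof. by rewrite after_nf_Cst => H; apply/monitored_cons. Qed.

Lemma monitored_after_Seq m P d1 d2 rest :
  operm (nf P) (after_nf (Seq (Cst d1) (Cst d2)) rest [:: [:: monitor m]]) ->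
  monitored m P (d1 :: d2 :: rest).
Proof. by rewrite after_nf_Seq => H; apply/monitored_cons. Qed.

Lemma monitored_after_Eps m P rest :
  operm (nf P) (after_nf Eps rest [:: [:: monitor m]]) -> monitored m P rest.
Proof. by rewrite after_nf_Eps; apply: monitored_soup_of. Qed.

(* How the observation word of a plain thread changes under one of its moves:
   silently, by an action the monitor absorbs, or by consuming its first letter
   (the rules always let that letter be skipped by a tau as well). *)
Definition plain_move (m : bool) (l : act) (s s' : seq label) : Prop :=
  [\/ l = tau /\ s' = s,
      (exists2 o, l = act_of_label o & ~~ visible m o) /\ s' = s
    | exists o, [/\ visible m o, l = act_of_label o \/ l = tau & s = o :: s']].

Lemma plain_move_catr m l s s' r :
  plain_move m l s s' -> plain_move m l (s ++ r) (s' ++ r).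
Proof.
case=> [[-> ->]|[Ho ->]|[o [Ho Hl ->]]]; [constructor 1 | constructor 2 | constructor 3] => //.
by exists o.
Qed.

Lemma plain_move_tau m s s' : plain_move m tau s s' -> subseq s' s.
Proof.
case=> [[_ ->]|[[[a|k] //] _]|[o [_ _ ->]]]; [exact: subseq_refl | exact: subseq_cons].
Qed.

Lemma plain_move_visible m o s s' :
  visible m o -> plain_move m (act_of_label o) s s' -> s = o :: s'.
Proof.
move=> Ho; case=> [[El _]|[[o' /act_of_label_inj <- Ho'] _]|
  [o' [_ [/act_of_label_inj <-|El] ->]]] //.
- by case: o El {Ho}.
- by rewrite Ho in Ho'.
- by case: o El {Ho}.
Qed.

Lemma plain_move_lZ m s s' : ~ plain_move m lZ s s'.
Proof. by case=> [[]|[[[] ]]|[[a|k] [_ []]]]. Qed.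

Lemma plain_move_lV m s s' : ~ plain_move m lV s s'.
Proof. by case=> [[]|[[[] ]]|[[a|k] [_ []]]]. Qed.

Lemma obs_thread1 m d : obs_thread m [:: d] = obs m d.
Proof. exact: cats0. Qed.

Lemma plain_const_step m c l R : plain_const c -> rule c l R ->
  exists y, [/\ forall rest others, after_nf R rest others = Some (soup_of (y ++ rest) ++ others),
    plain y & plain_move m l (obs m c) (obs_thread m y)].
Proof.
have Cst_case d rest others :
    after_nf (Cst d) rest others = Some (soup_of ([:: d] ++ rest) ++ others).
  by rewrite after_nf_Cst.
case: c => // [k|k|w ko] Hc HR; inversion HR; subst.
- exists [:: cW (u k) (Some k)]; rewrite obs_thread1; split => //.
    by split => //; apply: validW_u.
  by constructor 1.
- exists [:: cW (v k) (Some k)]; rewrite obs_thread1; split => //.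
    by split => //; apply: validW_v.
  by constructor 1.
- exists [:: cW w0 ko]; rewrite obs_thread1; split => //.
    by split => //; apply: validW_behead Hc.
  case: m; first by constructor 3; exists (inl a); split => //; left.
  by constructor 2; split => //; exists (inl a).
- exists [:: cW w None]; rewrite obs_thread1; split => //.
  case: m; first by constructor 2; split => //; exists (inr k).
  by constructor 3; exists (inr k); split => //; left.
- exists [:: cW w0 ko]; rewrite obs_thread1; split => //.
    by split => //; apply: validW_behead Hc.
  case: m; last by constructor 1.
  by constructor 3; exists (inl a); split => //; right.
- exists [:: cW w None]; rewrite obs_thread1; split => //.
  case: m; first by constructor 1.
  by constructor 3; exists (inr k); split => //; right.
- by exists [::]; split => //; case: m; constructor 1.
Qed.


Lemma monitored_plain_step m P x l P' : monitored m P x -> plain x -> step P l P' ->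
  (exists d, [/\ rule (monitor m) l (Cst d), d = monitor m \/ d = cC'
                & has_nf P' ([:: d] :: soup_of x)]) \/
  exists y, [/\ monitored m P' y, plain y & plain_move m l (obs_thread m x) (obs_thread m y)].
Proof.
move=> Hx Px /(monitored_step_inv Hx) [|[c [rest [R [Ex HR Ho]]]]]; first by left.
subst x; case: Px => Hc Prest; right.
have [y [ER Py Hmove]] := plain_const_step m Hc HR.
exists (y ++ rest); split.
- by apply: monitored_soup_of; rewrite /has_nf -ER.
- by apply/plain_cat.
- by rewrite obs_thread_cons obs_thread_cat; apply: plain_move_catr.
Qed.

Lemma monitored_plain_tau m P P' y : step P tau P' -> monitored m P y -> plain y ->
  exists y', [/\ monitored m P' y', plain y' & subseq (obs_thread m y') (obs_thread m y)].
Proof.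
move=> Hs Hy Py; case: (monitored_plain_step Hy Py Hs) => [[d [/monitor_rule_quiet [] //]]|].
by case=> y' [Hy' Py' /plain_move_tau]; exists y'.
Qed.

Lemma monitored_plain_tsteps m P P' y : tsteps P P' -> monitored m P y -> plain y ->
  exists y', [/\ monitored m P' y', plain y' & subseq (obs_thread m y') (obs_thread m y)].
Proof.
move=> T; elim: T y => [P0|P0 P1 Q0 H T IH] y Hy Py.
  by exists y; split => //; apply: subseq_refl.
have [y1 [H1 P1' S1]] := monitored_plain_tau H Hy Py.
have [y2 [H2 P2 S2]] := IH _ H1 P1'.
by exists y2; split => //; apply: subseq_trans S2 S1.
Qed.

Lemma monitored_plain_visible m P P' y o : step P (act_of_label o) P' -> visible m o ->
  monitored m P y -> plain y ->
  exists y', [/\ monitored m P' y', plain y' & obs_thread m y = o :: obs_thread m y'].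
Proof.
move=> Hs Ho Hy Py; case: (monitored_plain_step Hy Py Hs) => [[d [HR _ _]]|].
  by case: (monitor_rule_visible Ho HR).
by case=> y' [Hy' Py' /(plain_move_visible Ho)]; exists y'.
Qed.

Lemma monitored_plain_lZ m P P' y : monitored m P y -> plain y -> ~ step P lZ P'.
Proof.
move=> Hy Py Hs; case: (monitored_plain_step Hy Py Hs) => [[d [/monitor_rule_quiet [] //]]|].
by case=> y' [_ _ /plain_move_lZ].
Qed.

Lemma monitored_plain_lV m P P' y : monitored m P y -> plain y -> ~ step P lV P'.
Proof.
move=> Hy Py Hs; case: (monitored_plain_step Hy Py Hs) => [[d [/monitor_rule_quiet [] //]]|].
by case=> y' [_ _ /plain_move_lV].
Qed.

Lemma Z_rule_inv l R : rule cZ l R -> (l = tau \/ l = lZ) /\ R = Eps.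
Proof. by move=> HR; inversion HR; subst; split => //; [left | right]. Qed.

Lemma Gv_rule_inv l R : rule cGv l R ->
  [\/ exists k, l = tau /\ R = Seq (Cst cGv) (Cst (cV k)), l = tau /\ R = Eps
    | l = lV /\ R = Cst cZ].
Proof.
by move=> HR; inversion HR; subst; [constructor 1; exists k | constructor 2 | constructor 3].
Qed.

Lemma monitored_Z_step m P P' l y : step P l P' -> monitored m P (cZ :: y) ->
  l = tau \/ l = lZ -> monitored m P' y.
Proof.
move=> Hs /monitored_step_inv /(_ Hs) [[d [/monitor_rule_quiet [? ? ?] _ _]]|]; first by case.
case=> c [rest [R [[<- <-] /Z_rule_inv [_ ->] /monitored_after_Eps]]] //.
Qed.

Lemma monitored_Gv_step m P P' l y : step P l P' -> monitored m P (cGv :: y) ->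
  l = tau \/ l = lV ->
  (l = tau /\ ((exists k, monitored m P' (cGv :: cV k :: y)) \/ monitored m P' y)) \/
  (l = lV /\ monitored m P' (cZ :: y)).
Proof.
move=> Hs /monitored_step_inv /(_ Hs) [[d [/monitor_rule_quiet [? ? ?] _ _]]|]; first by case.
case=> c [rest [R [[<- <-] /Gv_rule_inv HR Ho]]] _.
case: HR => [[k [-> ER]]|[-> ER]|[-> ER]]; move: Ho; rewrite ER.
- by move/monitored_after_Seq; left; split => //; left; exists k.
- by move/monitored_after_Eps; left; split => //; right.
- by move/monitored_after_Cst; right.
Qed.

Lemma W_fire m w ko o os l : validW w -> obs m (cW w ko) = o :: os ->
  l = act_of_label o \/ l = tau ->
  exists w' ko', [/\ rule (cW w ko) l (Cst (cW w' ko')), validW w' & obs m (cW w' ko') = os].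
Proof.
case: m => /= [|Hv].
  case: w => [|a w] //= Hv [<- <-] Hl; exists w, ko; split => //; last exact: validW_behead Hv.
  by case: Hl => ->; [apply: r_W1 | apply: r_W3].
case: ko => [k|] //= [<- <-] Hl; exists w, None; split => //.
by case: Hl => ->; [apply: r_W2 | apply: r_W4].
Qed.

Lemma monitored_expand m P e t : monitored m P (e :: t) -> plain_const e ->
  exists P1 w ko, [/\ tsteps P P1, monitored m P1 (cW w ko :: t), validW w
                    & obs m (cW w ko) = obs m e].
Proof.
case: e => // [k|k|w ko] Hy He; last by exists P, w, ko; split => //; apply: ts_refl.
- have [P1 [S1 H1]] := monitored_step_Cst Hy (r_U u v k).
  by exists P1, (u k), (Some k); split => //; [apply: tsteps1 | apply: validW_u].
- have [P1 [S1 H1]] := monitored_step_Cst Hy (r_V u v k).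
  by exists P1, (v k), (Some k); split => //; [apply: tsteps1 | apply: validW_v].
Qed.

Lemma monitored_advance m Q y o os : monitored m Q y -> plain y -> obs_thread m y = o :: os ->
  exists Q1 y1, [/\ tsteps Q Q1, monitored m Q1 y1, plain y1, obs_thread m y1 = o :: os &
    forall l, l = act_of_label o \/ l = tau -> exists Q2 y2,
      [/\ step Q1 l Q2, monitored m Q2 y2, plain y2 & obs_thread m y2 = os]].
Proof.
elim: y Q os => [|e t IH] Q os //= Hy [He Ht].
have [Q0 [w [ko [T0 H0 Hw Ew]]]] := monitored_expand Hy He.
rewrite obs_thread_cons -Ew; case Ewk: (obs m (cW w ko)) => [|o1 os1] /= Eo.
  have [Q1 [T1 H1]] := monitored_kill_W H0 Hw.
  have [Q2 [y2 [T2 H2 P2 O2 F2]]] := IH _ _ H1 Ht Eo.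
  by exists Q2, y2; split => //; apply: tsteps_trans T0 (tsteps_trans T1 T2).
case: Eo => <- <-; exists Q0, (cW w ko :: t); split => //; first by rewrite obs_thread_cons Ewk.
move=> l Hl; have [w' [ko' [HR Hw' Ew']]] := W_fire Hw Ewk Hl.
have [Q2 [S2 H2]] := monitored_step_Cst H0 HR.
by exists Q2, (cW w' ko' :: t); split => //; rewrite obs_thread_cons Ew'.
Qed.

Definition B_thread (h : thread) : Prop := h = [::] \/ h = [:: cZ] \/ h = [:: cGv].

Definition related_threads m (x y : thread) : Prop :=
  exists h x' y', [/\ B_thread h, x = h ++ x', y = h ++ y', plain x' /\ plain y'
                    & obs_thread m x' = obs_thread m y'].

Definition monitored_rel m (P Q : proc) : Prop :=
  exists x y, [/\ monitored m P x, monitored m Q y & related_threads m x y].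

Definition bisim_rel m (P Q : proc) : Prop := monitored_rel m P Q \/ finished_rel u v P Q.

Lemma related_threads_sym m x y : related_threads m x y -> related_threads m y x.
Proof. by case=> h [x' [y' [Hh -> -> [Px Py] E]]]; exists h, y', x'. Qed.

Lemma related_plain m x y : plain x -> plain y -> obs_thread m x = obs_thread m y ->
  related_threads m x y.
Proof. by move=> Px Py E; exists [::], x, y; split => //; left. Qed.

Lemma disposable_B_thread h x : B_thread h -> plain x -> disposable u v (h ++ x).
Proof.
case=> [|[|]] -> Px /=; first by left.
- by right; exists cZ, x; split => //; right; left.
- by right; exists cGv, x; split => //; left.
Qed.

Lemma related_threads_disposable m x y : related_threads m x y ->
  disposable u v x /\ disposable u v y.
Proof. by case=> h [x' [y' [Hh -> -> [Px Py] _]]]; split; apply: disposable_B_thread. Qed.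

Lemma bisim_rel_sym m P Q : bisim_rel m P Q -> bisim_rel m Q P.
Proof.
case=> [[x [y [Hx Hy Hxy]]]|[[HP HQ]|H]].
- by left; exists y, x; split => //; apply: related_threads_sym.
- by right; left.
- by right; right; apply: sc_sym.
Qed.

Lemma monitor_move_match m P Q P' x y l d : monitored m P x -> monitored m Q y ->
  related_threads m x y -> rule (monitor m) l (Cst d) -> d = monitor m \/ d = cC' ->
  has_nf P' ([:: d] :: soup_of x) -> branching_match u v (bisim_rel m) P Q l P'.
Proof.
move=> Hx Hy Hxy HR Hd HP'; have [Q' [S' HQ']] := monitored_step_monitor Hy HR.
left; exists Q, Q'; split; [exact: ts_refl | exact: S' | by left; exists x, y |].
case: Hd HP' HQ' => -> HP' HQ'; first by left; exists x, y.
have [Dx Dy] := related_threads_disposable Hxy.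
by right; left; split; [exists (soup_of x) | exists (soup_of y)]; split => //;
  apply: disposable_soup_of.
Qed.

Lemma plain_thread_match m P Q P' x y x' l : monitored m P x -> monitored m Q y ->
  plain x -> plain y -> obs_thread m x = obs_thread m y ->
  monitored m P' x' -> plain x' -> plain_move m l (obs_thread m x) (obs_thread m x') ->
  branching_match u v (bisim_rel m) P Q l P'.
Proof.
move=> Hx Hy Px Py Oxy Hx' Px'.
have HPQ : bisim_rel m P Q by left; exists x, y; split => //; apply: related_plain.
case=> [[-> Ox']|[[o -> Ho] Ox']|[o [Ho Hl Ox]]].
- by right; split => //; left; exists x', y; split => //; apply: related_plain; rewrite // Ox'.
- have [Q' [S' HQ']] := monitored_step_monitor Hy (monitor_absorbs Ho).
  left; exists Q, Q'; split => //; first exact: ts_refl.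
  by left; exists x', y; split => //; apply: related_plain; rewrite // Ox'.
rewrite Oxy in Ox; have [Q1 [y1 [T1 Hy1 Py1 Oy1 F]]] := monitored_advance Hy Py Ox.
have [Q2 [y2 [S2 Hy2 Py2 Oy2]]] := F l Hl.
left; exists Q1, Q2; split => //.
  by left; exists x, y1; split => //; apply: related_plain; rewrite // Oy1 -Ox.
by left; exists x', y2; split => //; apply: related_plain; rewrite // Oy2.
Qed.

Lemma head_thread_match m P Q P' h x' y' l : h = [:: cZ] \/ h = [:: cGv] ->
  monitored m P (h ++ x') -> monitored m Q (h ++ y') -> plain x' -> plain y' ->
  obs_thread m x' = obs_thread m y' -> step P l P' ->
  branching_match u v (bisim_rel m) P Q l P'.
Proof.
move=> Hh Hx Hy Px Py Oxy Hs.
have Hxy : related_threads m (h ++ x') (h ++ y') by exists h, x', y'; split => //; right.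
case: (monitored_step_inv Hx Hs) => [[d [HR Hd HP']]|[c [rest [R [Ex HR Ho]]]]].
  exact: monitor_move_match Hx Hy Hxy HR Hd HP'.
have HPQ : bisim_rel m P Q by left; exists (h ++ x'), (h ++ y').
have answer Q' x'' y'' : step Q l Q' -> monitored m P' x'' -> monitored m Q' y'' ->
    related_threads m x'' y'' -> branching_match u v (bisim_rel m) P Q l P'.
  move=> S' HP' HQ' Hr; left; exists Q, Q'; split => //; first exact: ts_refl.
  by left; exists x'', y''.
case: Hh Ex HR Ho Hx Hy Hxy HPQ => -> [<- <-] HR Ho Hx Hy Hxy HPQ.
  case: (Z_rule_inv HR) => Hl ER; rewrite ER in Ho.
  have [Q' [S' HQ']] : exists Q', step Q l Q' /\ monitored m Q' y'.
    by case: Hl => El; subst l;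
      [apply: monitored_step_Eps Hy (r_Z1 u v) | apply: monitored_step_Eps Hy (r_Z2 u v)].
  by apply: answer _ _ _ S' (monitored_after_Eps Ho) HQ' (related_plain Px Py Oxy).
case: (Gv_rule_inv HR) => [[k [El ER]]|[El ER]|[El ER]]; subst l; rewrite ER in Ho.
- have [Q' [S' HQ']] := monitored_step_Seq Hy (r_Gv1 u v k).
  apply: answer _ _ _ S' (monitored_after_Seq Ho) HQ' _.
  exists [:: cGv], (cV k :: x'), (cV k :: y'); split => //; first by right; right.
  by rewrite !obs_thread_cons Oxy.
- have [Q' [S' HQ']] := monitored_step_Eps Hy (r_Gv2 u v).
  exact: answer _ _ _ S' (monitored_after_Eps Ho) HQ' (related_plain Px Py Oxy).
- have [Q' [S' HQ']] := monitored_step_Cst Hy (r_Gv3 u v).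
  apply: answer _ _ _ S' (monitored_after_Cst Ho) HQ' _.
  by exists [:: cZ], x', y'; split => //; right; left.
Qed.

Lemma monitored_rel_match m P Q l P' : monitored_rel m P Q -> step P l P' ->
  branching_match u v (bisim_rel m) P Q l P'.
Proof.
move=> [x [y [Hx Hy Hxy]]] Hs; have Hxy' := Hxy.
case: Hxy' Hx Hy Hxy => h [x' [y' [[Eh|Hh] -> -> [Px Py] Oxy]]] Hx Hy Hxy; last first.
  exact: head_thread_match Hh Hx Hy Px Py Oxy Hs.
subst h; case: (monitored_plain_step Hx Px Hs) => [[d [HR Hd HP']]|[x'' [Hx'' Px'' Hmove]]].
  exact: monitor_move_match Hx Hy Hxy HR Hd HP'.
exact: plain_thread_match Hx Hy Px Py Oxy Hx'' Px'' Hmove.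
Qed.

Lemma bisim_rel_branching m : branching_bisimulation u v (bisim_rel m).
Proof.
apply: branching_bisimulation_sym => [P Q|P Q l P']; first exact: bisim_rel_sym.
case=> [HPQ /(monitored_rel_match HPQ)|[[HP HQ] /(finished_match HP HQ)|H /(scong_match H)]].
- by [].
- by apply: branching_match_mono => P1 Q1 H1; right.
- by apply: branching_match_mono => P1 Q1 H1; right; right.
Qed.

Lemma wstep_visible Q o Q' : wstep u v Q (act_of_label o) Q' ->
  exists Qa Qb, [/\ tsteps Q Qa, step Qa (act_of_label o) Qb & tsteps Qb Q'].
Proof. by case: o. Qed.

Lemma monitored_Z_tsteps m P P' y : tsteps P P' -> monitored m P (cZ :: y) -> plain y ->
  monitored m P' (cZ :: y) \/
  exists y', [/\ monitored m P' y', plain y' & subseq (obs_thread m y') (obs_thread m y)].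
Proof.
case=> [P0|P0 P1 Q0 H T] Hy Py; first by left.
by right; apply: monitored_plain_tsteps T (monitored_Z_step H Hy (or_introl erefl)) Py.
Qed.

Lemma monitored_Gv_tsteps m P P' y : tsteps P P' -> monitored m P (cGv :: y) -> plain y ->
  (exists ks, monitored m P' (cGv :: map cV ks ++ y)) \/
  exists y', monitored m P' y' /\ plain y'.
Proof.
move=> T; elim: T y => [P0|P0 P1 Q0 H T IH] y Hy Py; first by left; exists [::].
case: (monitored_Gv_step H Hy (or_introl erefl)) => [[_ [[k Hk]|Hk]]|[]] //.
  case: (IH _ Hk (conj I Py)) => [[ks Hks]|]; last by right.
  by left; exists (rcons ks k); rewrite map_rcons -cats1 -catA.
by have [y' [H1 H2 _]] := monitored_plain_tsteps T Hk Py; right; exists y'.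
Qed.

Section WeakBisimulation.
Variables (m : bool) (R : proc -> proc -> Prop).
Hypothesis wR : weak_bisimulation u v R.

(* Induction on the observation word of [x]: each of its letters must be
   matched by the same visible action of the other side. *)
Lemma weak_bisim_plain_subseq P Q x y : R P Q -> monitored m P x -> monitored m Q y ->
  plain x -> plain y -> subseq (obs_thread m x) (obs_thread m y).
Proof.
move Es: (obs_thread m x) => s; elim: s P Q x y Es => [|o s IH] P Q x y Es HR Hx Hy Px Py.
  exact: sub0seq.
have Ho : visible m o by move: (visible_obs_thread m x); rewrite Es => /andP [].
have [P1 [x1 [T1 Hx1 Px1 _ F]]] := monitored_advance Hx Px Es.
have [P2 [x2 [S2 Hx2 Px2 Ox2]]] := F _ (or_introl erefl).
have [Q1 [TQ1 R1]] := weak_bisimulation_tsteps wR HR T1.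
have [Q2 [/wstep_visible [Qa [Qb [Ta Sb Tb]]] R2]] := (wR R1).1 _ _ S2.
have [y1 [Hy1 Py1 Sy1]] := monitored_plain_tsteps TQ1 Hy Py.
have [y2 [Hy2 Py2 Sy2]] := monitored_plain_tsteps Ta Hy1 Py1.
have [y3 [Hy3 Py3 Oy3]] := monitored_plain_visible Sb Ho Hy2 Py2.
have [y4 [Hy4 Py4 Sy4]] := monitored_plain_tsteps Tb Hy3 Py3.
have Sub := IH _ _ _ _ Ox2 R2 Hx2 Hy4 Px2 Py4.
apply: subseq_trans (subseq_trans Sy2 Sy1); rewrite Oy3 /=.
by rewrite eqxx; apply: subseq_trans Sub Sy4.
Qed.

Lemma weak_bisim_Z_subseq P Q x y : R P Q ->
  monitored m P (cZ :: x) -> monitored m Q (cZ :: y) -> plain x -> plain y ->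
  subseq (obs_thread m x) (obs_thread m y).
Proof.
move=> HR Hx Hy Px Py.
have [P1 [S1 HP1]] := monitored_step_Eps Hx (r_Z1 u v).
have [Q1 [W1 R1]] := (wR HR).1 _ _ S1.
case: (monitored_Z_tsteps W1 Hy Py) => [HQ1|[y' [HQ1 Py' Sy]]].
  have [Q2 [S2 _]] := monitored_step_Eps HQ1 (r_Z2 u v).
  have [P2 [[Pa [Pb [Ta Sa _]]] _]] := (wR R1).2 _ _ S2.
  have [x' [Hx' Px' _]] := monitored_plain_tsteps Ta HP1 Px.
  by case: (monitored_plain_lZ Hx' Px' Sa).
exact: subseq_trans (weak_bisim_plain_subseq R1 HP1 HQ1 Px Py') Sy.
Qed.

End WeakBisimulation.

(* Firing lambda_V forces the partner's G_v to fire too, possibly after it has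
   unfolded some V_k in front of its thread. *)
Lemma weak_bisim_Gv_obs m R P Q x y : weak_bisimulation u v R -> R P Q ->
  monitored m P (cGv :: x) -> monitored m Q (cGv :: y) -> plain x -> plain y ->
  exists ks, obs_thread m x = obs_thread m (map cV ks) ++ obs_thread m y.
Proof.
move=> wR HR Hx Hy Px Py.
have [P1 [S1 HP1]] := monitored_step_Cst Hx (r_Gv3 u v).
have [Q1 [[Qa [Qb [Ta Sa Tb]]] R1]] := (wR _ _ HR).1 _ _ S1.
case: (monitored_Gv_tsteps Ta Hy Py) => [[ks Hks]|[y' [Hy' Py']]]; last first.
  by case: (monitored_plain_lV Hy' Py' Sa).
have Pks : plain (map cV ks ++ y) by apply/plain_cat; split => //; apply: plain_map_V.
case: (monitored_Gv_step Sa Hks (or_intror erefl)) => [[]|[_ Hb]] //.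
case: (monitored_Z_tsteps Tb Hb Pks) => [HQ1|[y' [HQ1 Py' _]]].
  exists ks; rewrite -obs_thread_cat; apply/subseq_anti/andP; split.
    exact (weak_bisim_Z_subseq wR R1 HP1 HQ1 Px Pks).
  exact (weak_bisim_Z_subseq (weak_bisimulation_flip wR) R1 HQ1 HP1 Pks Px).
have [P2 [S2 _]] := monitored_step_Eps HP1 (r_Z2 u v).
have [Q2 [[Qc [Qd [Tc Sc _]]] _]] := (wR _ _ R1).1 _ _ S2.
have [y'' [Hy'' Py'' _]] := monitored_plain_tsteps Tc HQ1 Py'.
by case: (monitored_plain_lZ Hy'' Py'' Sc).
Qed.

Lemma weak_bisim_monitored_obs m R P Q h x y : weak_bisimulation u v R -> R P Q ->
  B_thread h -> monitored m P (h ++ x) -> monitored m Q (h ++ y) -> plain x -> plain y ->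
  obs_thread m x = obs_thread m y.
Proof.
have flip := @weak_bisimulation_flip _ _ u v R.
move=> wR HR [|[|]] -> /= Hx Hy Px Py.
- apply/subseq_anti/andP; split; first exact (weak_bisim_plain_subseq wR HR Hx Hy Px Py).
  exact (weak_bisim_plain_subseq (flip wR) HR Hy Hx Py Px).
- apply/subseq_anti/andP; split; first exact (weak_bisim_Z_subseq wR HR Hx Hy Px Py).
  exact (weak_bisim_Z_subseq (flip wR) HR Hy Hx Py Px).
have [ks1 E1] := weak_bisim_Gv_obs wR HR Hx Hy Px Py.
have [ks2 E2] := weak_bisim_Gv_obs (flip wR) HR Hy Hx Py Px.
rewrite E2; suff -> : obs_thread m (map cV ks2) = [::] by [].
have := congr1 size E1; rewrite E2 !size_cat addnA => /eqP.
rewrite -{1}[size (obs_thread m x)]add0n eqn_add2r eq_sym addn_eq0.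
by case/andP=> _ /eqP/size0nil.
Qed.

Definition B_of (h : thread) : proc := if h is [:: c] then Cst c else Eps.

Definition monitored_start m h (L : thread) : proc :=
  Par (Cst (monitor m)) (Seq (B_of h) (seqp L)).

Lemma monitored_start_monitored m h L : B_thread h -> monitored m (monitored_start m h L) (h ++ L).
Proof.
rewrite /monitored /has_nf /= nf_seqp.
by case=> [|[|]] -> /=; case: L => [|e L] /=; apply: Permutation_refl.
Qed.

Lemma monitored_start_branching m h L1 L2 : B_thread h -> plain L1 -> plain L2 ->
  obs_thread m L1 = obs_thread m L2 ->
  branching_bisimilar u v (monitored_start m h L1) (monitored_start m h L2).
Proof.
move=> Hh P1 P2 E; exists (bisim_rel m); split; first exact: bisim_rel_branching.
left; exists (h ++ L1), (h ++ L2); split; try exact: monitored_start_monitored.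
by exists h, L1, L2.
Qed.

Lemma monitored_start_weak m h L1 L2 : B_thread h -> plain L1 -> plain L2 ->
  weakly_bisimilar u v (monitored_start m h L1) (monitored_start m h L2) ->
  obs_thread m L1 = obs_thread m L2.
Proof.
move=> Hh P1 P2 [R [wR HR]].
exact: weak_bisim_monitored_obs wR HR Hh (monitored_start_monitored _ _ Hh)
  (monitored_start_monitored _ _ Hh) P1 P2.
Qed.

Lemma monitored_start_bisimilar m h L1 L2 (eqv : proc -> proc -> Prop) :
  eqv = branching_bisimilar u v \/ eqv = weakly_bisimilar u v ->
  B_thread h -> plain L1 -> plain L2 ->
  eqv (monitored_start m h L1) (monitored_start m h L2) <->
  obs_thread m L1 = obs_thread m L2.
Proof.
move=> heqv Hh P1 P2; split.
  case: heqv => ->; last exact: monitored_start_weak.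
  by move/branching_bisimilar_weakly; apply: monitored_start_weak.
move/(monitored_start_branching Hh P1 P2); case: heqv => -> //.
exact: branching_bisimilar_weakly.
Qed.
End Monitor.

Lemma obs_thread_map_cU (Sg : eqType) n (u v : 'I_n -> seq Sg) m ks :
  obs_thread u v m (map (@cU Sg n) ks) =
  if m then map inl (flatten (map u ks)) else map inr ks.
Proof.
elim: ks => [|k ks IH]; first by case: m.
by rewrite obs_thread_cons IH; case: (m); rewrite //= map_cat.
Qed.

Lemma obs_thread_map_cV (Sg : eqType) n (u v : 'I_n -> seq Sg) m ks :
  obs_thread u v m (map (@cV Sg n) ks) =
  if m then map inl (flatten (map v ks)) else map inr ks.
Proof.
elim: ks => [|k ks IH]; first by case: m.
by rewrite obs_thread_cons IH; case: (m); rewrite //= map_cat.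
Qed.

Theorem lemma5 (Sg : finType) (n : nat) (u v : 'I_n -> seq Sg)
  (hSg : 2 <= #|Sg|)
  (hu : forall k, 0 < size (u k)) (hv : forall k, 0 < size (v k))
  (is_ js : seq 'I_n) (B : proc Sg n)
  (hB : B = Eps \/ B = Cst cZ \/ B = Cst cGv)
  (ps : seq ('I_n + 'I_n))
  (eqv : proc Sg n -> proc Sg n -> Prop)
  (heqv : eqv = branching_bisimilar u v \/ eqv = weakly_bisimilar u v) :
  let BPU := Seq B (seqp (map (@UV Sg n) ps ++ map (@cU Sg n) is_)) in
  let BPV := Seq B (seqp (map (@UV Sg n) ps ++ map (@cV Sg n) js)) in
  (eqv (Par (Cst cI) BPU) (Par (Cst cI) BPV) <->
     flatten (map u is_) = flatten (map v js)) /\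
  (eqv (Par (Cst cS) BPU) (Par (Cst cS) BPV) <-> is_ = js).
Proof.
have [h [Hh ->]] : exists h, B_thread h /\ B = B_of h.
  by case: hB => [|[|]] ->; [exists [::] | exists [:: cZ] | exists [:: cGv]];
    split => //; [left | right; left | right; right].
have plain_ps L : plain u v L -> plain u v (map (@UV Sg n) ps ++ L).
  by move=> PL; apply/plain_cat; split => //; apply: plain_map_UV.
have obs_ps m L1 L2 : obs_thread u v m (map (@UV Sg n) ps ++ L1) =
    obs_thread u v m (map (@UV Sg n) ps ++ L2) <-> obs_thread u v m L1 = obs_thread u v m L2.
  by rewrite !obs_thread_cat; split => [/eqP|->//]; rewrite eqseq_cat // eqxx => /eqP.
have key m := iff_trans (monitored_start_bisimilar m heqv Hh
  (plain_ps _ (plain_map_U u v is_)) (plain_ps _ (plain_map_V u v js))) (obs_ps m _ _).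
split; [apply: iff_trans (key true) _ | apply: iff_trans (key false) _];
  rewrite obs_thread_map_cU obs_thread_map_cV; split => [|-> //]; by apply: inj_map => ? ? [].
Qed.
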